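(* For every infinite cardinal $\kappa$, there is a subalgebra of the free Boolean algebra $\mathrm{Fr}(\kappa^+)$ which does not have the $\kappa$-FN.
   Context: $\mathrm{Fr}(\kappa^+)$ denotes the free Boolean algebra on $\kappa^+$ generators. For an infinite cardinal $\kappa$, a Boolean algebra $B$ has the $\kappa$-Freese–Nation property ($\kappa$-FN) if there is a map $f:B\to[B]^{<\kappa}$ such that for all $a,b\in B$ with $a\le b$ there is $c\in f(a)\cap f(b)$ with $a\le c\le b$. *)

From HB Require Import structures.
From mathcomp Require Import all_boot.
From mathcomp Require Import boolp classical_sets cardinality.
Set Implicit Arguments. Unset Strict Implicit. Unset Printing Implicit Defensive.
Local Open Scope classical_set_scope.
Local Open Scope card_scope.

Definition set_subalgebra (T : Type) (B : set (set T)) : Prop :=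
  [/\ B set0, B setT,
      (forall A, B A -> B (~` A)),
      (forall A C, B A -> B C -> B (A `|` C)) &
      (forall A C, B A -> B C -> B (A `&` C))].

(* Fr(X): the free Boolean algebra on the generators X, realised (Stone)
   as the subalgebra of P(2^X) generated by the independent coordinate sets
   { f : X -> bool | f x = true }, x in X. *)
Definition coord_gens (X : Type) : set (set (X -> bool)) :=
  range (fun x : X => [set f : X -> bool | f x = true]).

Definition Fr (X : Type) : set (set (X -> bool)) :=
  smallest (set_subalgebra (T:=X -> bool)) (@coord_gens X).

(* L has cardinality kappa^+ where kappa = |K|: |K| < |L| and every subset
   of L of cardinality > |K| has cardinality |L|. *)
Definition is_successor_card (K L : Type) : Prop :=
  ([set: K] #<= [set: L]) /\ ~ ([set: L] #<= [set: K]) /\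
  (forall A : set L, ~ (A #<= [set: K]) -> [set: L] #<= A).

(* kappa-Freese-Nation property of a Boolean algebra B of sets (order = inclusion),
   kappa = |K|; [B]^{<kappa} = subsets of B of cardinality < |K|. *)
Definition kappa_FN (K T : Type) (B : set (set T)) : Prop :=
  exists f : set T -> set (set T),
    (forall a, B a -> f a `<=` B /\ ~ ([set: K] #<= f a)) /\
    (forall a b, B a -> B b -> a `<=` b ->
       exists c, f a c /\ f b c /\ a `<=` c /\ c `<=` b).

Arguments coord_gens X : clear implicits.
Arguments Fr X : clear implicits.
Arguments set_subalgebra {T} B.
Arguments kappa_FN K {T} B.
Arguments is_successor_card K L : clear implicits.

From mathcomp Require Import all_boot.
From mathcomp Require Import boolp classical_sets functions cardinality.
Set Implicit Arguments. Unset Strict Implicit. Unset Printing Implicit Defensive.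
Local Open Scope classical_set_scope.
Local Open Scope card_scope.

(* Fix o outside a set E of cardinality kappa and let B consist of the elements
   of Fr(L) (clopen subsets of 2^L) that do not separate the two points [only o]
   and [all_but o] of the Stone space.  For x, y <> o the elements
   [o] /\ [x] <= [o] \/ [y] lie in B, and any c in B between them changes
   membership when [only o] is toggled at x or when [all_but o] is toggled at y;
   an element of Fr(L) is sensitive to toggling at only finitely many
   coordinates.  Given a kappa-FN map f, the coordinates at which the members of
   f([o] \/ [y]), y in E, are sensitive for [only o] are at most kappa many, so,
   as |L| > kappa, some a <> o avoids them.  Then every y in E is a sensitive
   coordinate for [all_but o] of a member of f([o] /\ [a]), a union of fewer
   than kappa finite sets. *)

Lemma sub_image_card_le T U (A : set T) (B : set U) (f : U -> T) :
  A `<=` f @` B -> A #<= B.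
Proof. by move=> /subset_card_le /card_le_trans; apply; exact: card_image_le. Qed.

Lemma card_le_subset_eq T U (A : set T) (B : set U) :
  A #<= B -> exists2 E, E `<=` B & E #= A.
Proof.
elim/Ppointed: U => U in B *.
  by rewrite card_le_emptyr => /eqP ->; exists set0 => //; exact: card_eq00.
by move=> /pcard_leP[f]; exists (f @` A); [exact: fun_image_sub | exact: card_image].
Qed.

Lemma card_le_setN T U (A : set T) (C : set U) :
  ~ ([set: T] #<= C) -> A #<= C -> exists a, ~ A a.
Proof.
move=> TC AC; apply: contra_notP TC => /forallNP nA.
by apply: card_le_trans AC; apply: subset_card_le => a _; exact: contra_notP (nA a).
Qed.

Lemma finite_card_le_infinite T U (A : set T) (B : set U) :
  finite_set A -> infinite_set B -> A #<= B.
Proof. by move=> /finite_set_countable /card_le_trans + /infiniteP; apply. Qed.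

Lemma card_setX_le T T' U U' (A : set T) (A' : set T') (B : set U) (B' : set U') :
  A #<= A' -> B #<= B' -> A `*` B #<= A' `*` B'.
Proof.
move=> /pfcard_geP[->|/surjfunPex[f Af]]; first by rewrite set0X.
move=> /pfcard_geP[->|/surjfunPex[g Bg]]; first by rewrite setX0.
rewrite Af Bg.
apply: (@sub_image_card_le _ _ _ _ (fun p => (f p.1, g p.2))).
by move=> [_ _] [/= [a Aa <-] [b Bb <-]]; exists (a, b).
Qed.

Lemma card_setU_le T U (A B : set T) (C : set U) :
  A #<= C -> B #<= C -> A `|` B #<= [set: bool] `*` C.
Proof.
elim/Ppointed: T => T in A B *; first by move=> *; exact: card_le_emptyl.
move=> /pcard_surjP[f fA] /pcard_surjP[g gB].
apply: (@sub_image_card_le _ _ _ _ (fun p => if p.1 then f p.2 else g p.2)).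
move=> t [/fA[u Cu <-]|/gB[u Cu <-]]; first by exists (true, u).
by exists (false, u).
Qed.

Lemma card_bigcup_le I T U (D : set I) (F : I -> set T) (J : set U) :
  (forall i, D i -> F i #<= J) -> \bigcup_(i in D) F i #<= D `*` J.
Proof.
elim/Ppointed: T => T in F *; first by move=> _; exact: card_le_emptyl.
move=> FJ; have /choice[g gF] : forall i, exists g : U -> T, D i -> F i `<=` g @` J.
  move=> i; have [Di|nDi] := pselect (D i); last by exists (fun=> point).
  by have /pcard_surjP[g] := FJ i Di; exists g.
apply: (@sub_image_card_le _ _ _ _ (fun p => g p.1 p.2)) => t [i Di Fit].
by have [u Ju <-] := gF i Di t Fit; exists (i, u).
Qed.

Lemma chain_bigcup_common T (F : set (set T)) p q :
  total_on F subset -> (\bigcup_(G in F) G) p -> (\bigcup_(G in F) G) q ->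
  exists2 G, F G & G p /\ G q.
Proof.
move=> Ftot [G FG Gp] [G' FG' G'q].
have [GG'|G'G] := Ftot _ _ FG FG'; first by exists G' => //; split => //; exact: GG'.
by exists G => //; split; last exact: G'G.
Qed.

Definition partial_bij T U (R : set (T * U)) :=
  forall p q, R p -> R q -> (p.1 = q.1 <-> p.2 = q.2).

Lemma partial_bij_card_eq T U (R : set (T * U)) :
  partial_bij R -> fst @` R #= snd @` R.
Proof.
move=> Rbij; have pair_eq p q : R p -> R q -> p.1 = q.1 -> p.2 = q.2 -> p = q.
  by case: p q => [x y] [x' y'] _ _ /= -> ->.
apply: (@card_eq_trans _ _ _ _ R).
  apply: inj_card_eq => p q /set_mem Rp /set_mem Rq e.
  by apply: pair_eq => //; exact/(Rbij _ _ Rp Rq).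
apply/card_esym/inj_card_eq => p q /set_mem Rp /set_mem Rq e.
by apply: pair_eq => //; exact/(Rbij _ _ Rp Rq).
Qed.

Lemma partial_bij_bigcup T U (F : set (set (T * U))) :
  total_on F subset -> (forall R, F R -> partial_bij R) ->
  partial_bij (\bigcup_(R in F) R).
Proof.
move=> Ftot Fbij p q Fp Fq.
by have [R FR [Rp Rq]] := chain_bigcup_common Ftot Fp Fq; exact: Fbij R FR p q Rp Rq.
Qed.

Lemma card_le_total T U (A : set T) (B : set U) : A #<= B \/ B #<= A.
Proof.
pose P := [set R : set (T * U) | R `<=` A `*` B /\ partial_bij R].
have [M [[MAB Mbij] Mmax]] : exists M, P M /\ forall R, M `<` R -> ~ P R.
  apply: Zorn_bigcup => F FP Ftot; split; last first.
    by apply: partial_bij_bigcup => // R FR; exact: (FP R FR).2.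
  by move=> p [R FR Rp]; exact: (FP R FR).1.
have MAB_eq := partial_bij_card_eq Mbij.
have [AM|/existsNP[x /not_implyP[Ax Mx]]] := pselect (A `<=` fst @` M).
  left; apply: card_le_trans (subset_card_le AM) _.
  by rewrite (card_le_eql MAB_eq); apply: subset_card_le => _ [p /MAB[_ ?] <-].
have [BM|/existsNP[y /not_implyP[By My]]] := pselect (B `<=` snd @` M).
  right; apply: card_le_trans (subset_card_le BM) _.
  by rewrite -(card_le_eql MAB_eq); apply: subset_card_le => _ [p /MAB[? _] <-].
have newx p : M p -> p.1 <> x by move=> Mp px; apply: Mx; exists p.
have newy p : M p -> p.2 <> y by move=> Mp py; apply: My; exists p.
exfalso; apply: (Mmax (M `|` [set (x, y)])).
  split; first by move=> p Mp; left.
  by move=> /(_ (x, y) (or_intror erefl)) /newx; apply.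
split; first by move=> p [/MAB //|->].
move=> p q [Mp|->] [Mq|->] //; first exact: Mbij.
  by split=> /= e; [case: (newx p)|case: (newy p)].
by split=> /= e; [case: (newx q)|case: (newy q)].
Qed.

Lemma card_setU_le_sq T U (A B : set T) (C : set U) :
  C `*` C #<= C -> infinite_set C -> A #<= C -> B #<= C -> A `|` B #<= C.
Proof.
move=> CC Cinf AleC BleC; apply: card_le_trans (card_setU_le AleC BleC) _.
apply: card_le_trans _ CC; apply: card_setX_le (card_lexx C).
exact: finite_card_le_infinite finite_finset Cinf.
Qed.

Definition graph_on I U (D : set I) (f : I -> U) : set (I * U) :=
  [set (i, f i) | i in D].

Lemma partial_bij_graph_on I U (D : set I) (f : I -> U) :
  set_inj D f -> partial_bij (graph_on D f).
Proof.
move=> finj _ _ [i Di <-] [j Dj <-] /=; split=> [-> //|].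
exact: finj (mem_set Di) (mem_set Dj).
Qed.

Lemma glue_set_inj T U (D P : set T) (X Y : set U) (g h : T -> U) :
  set_fun P X g -> set_inj P g -> set_fun D Y h -> set_inj D h -> X `&` Y = set0 ->
  set_inj D (fun p => if `[< P p >] then g p else h p).
Proof.
move=> gX ginj hY hinj XY0 p q Dp Dq.
have gh p' q' : P p' -> D q' -> g p' <> h q'.
  move=> Pp' Dq' e; suff : (X `&` Y) (g p') by rewrite XY0.
  by split; [exact: gX | rewrite e; exact: hY].
case: (asboolP (P p)) => Pp; case: (asboolP (P q)) => Pq.
- exact: ginj (mem_set Pp) (mem_set Pq).
- by move=> /(gh _ _ Pp (set_mem Dq)).
- by move=> /esym /(gh _ _ Pq (set_mem Dp)).
- exact: hinj.
Qed.

Section Hessenberg.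
Variable T : pointedType.
Implicit Types (G M : set ((T * T) * T)) (X Y : set T).

Definition sq_dom G : set T := [set x | exists z, G ((x, x), z)].

Definition square_inj G :=
  [/\ partial_bij G, fst @` G = sq_dom G `*` sq_dom G & snd @` G `<=` sq_dom G].

Lemma sq_dom_sub G G' : G `<=` G' -> sq_dom G `<=` sq_dom G'.
Proof. by move=> GG' x [z Gz]; exists z; exact: GG'. Qed.

Lemma square_inj_card_le G : square_inj G -> sq_dom G `*` sq_dom G #<= sq_dom G.
Proof.
move=> [Gbij <- GX]; rewrite (card_le_eql (partial_bij_card_eq Gbij)).
exact: subset_card_le.
Qed.

Lemma sq_dom_graph X (f : T * T -> T) : sq_dom (graph_on (X `*` X) f) = X.
Proof.
apply/seteqP; split=> [x [z [[a b] [/= Xa _] [<- _ _]]] //|x Xx].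
by exists (f (x, x)), (x, x).
Qed.

Lemma square_inj_graph X (f : T * T -> T) :
  set_fun (X `*` X) X f -> set_inj (X `*` X) f -> square_inj (graph_on (X `*` X) f).
Proof.
move=> fX finj; rewrite /square_inj sq_dom_graph; split.
- exact: partial_bij_graph_on.
- apply/seteqP; split=> [_ [_ [p Xp <-] <-] //|p Xp].
  by exists (p, f p) => //; exists p.
- by move=> _ [_ [p Xp <-] <-]; exact: fX.
Qed.

Lemma square_inj_of_card_le X :
  X `*` X #<= X -> exists G, square_inj G /\ sq_dom G = X.
Proof.
move=> /pcard_leP/injfunPex[f fX finj]; exists (graph_on (X `*` X) f).
by split; [exact: square_inj_graph | exact: sq_dom_graph].
Qed.

Lemma square_inj_bigcup (F : set (set ((T * T) * T))) :
  total_on F subset -> (forall G, F G -> square_inj G) ->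
  square_inj (\bigcup_(G in F) G).
Proof.
move=> Ftot Fsq; set U := \bigcup_(G in F) G.
have sq_domU G : F G -> sq_dom G `<=` sq_dom U.
  by move=> FG; apply: sq_dom_sub => q Gq; exists G.
split.
- by apply: partial_bij_bigcup => // G /Fsq[].
- apply/seteqP; split.
    move=> _ [q [G FG Gq] <-]; have [_ GX _] := Fsq G FG.
    have : (sq_dom G `*` sq_dom G) q.1 by rewrite -GX; exists q.
    by move=> [/(sq_domU _ FG) ? /(sq_domU _ FG) ?].
  move=> [a b] [[za Uza] [zb Uzb]].
  have [G FG [Ga Gb]] := chain_bigcup_common Ftot Uza Uzb.
  have [_ GX _] := Fsq G FG.
  have : (fst @` G) (a, b) by rewrite GX; split; [exists za|exists zb].
  by move=> [q Gq <-]; exists q => //; exists G.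
- move=> _ [q [G FG Gq] <-]; apply: (sq_domU G FG).
  by have [_ _] := Fsq G FG; apply; exists q.
Qed.

Lemma square_inj_graphP M : square_inj M ->
  exists g, [/\ M = graph_on (sq_dom M `*` sq_dom M) g,
    set_fun (sq_dom M `*` sq_dom M) (sq_dom M) g & set_inj (sq_dom M `*` sq_dom M) g].
Proof.
set X := sq_dom M => -[Mbij MX MsndX].
have /choice[g gM] : forall p, exists z, (X `*` X) p -> M (p, z).
  move=> p; have [|nXp] := pselect ((X `*` X) p); last by exists point => /nXp.
  by rewrite -MX => -[[p' z] Mpz <-]; exists z.
exists g; split.
- apply/seteqP; split=> [[p z] Mpz|_ [p Xp <-]]; last exact: gM.
  have Xp : (X `*` X) p by rewrite -MX; exists (p, z).
  by exists p => //; congr (_, _); apply/(Mbij _ _ (gM _ Xp) Mpz).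
- by move=> p Xp; apply: MsndX; exists (p, g p); first exact: gM.
- by move=> p q /set_mem Xp /set_mem Xq e; apply/(Mbij _ _ (gM _ Xp) (gM _ Xq)).
Qed.

Lemma square_inj_extend M Y :
  square_inj M -> infinite_set (sq_dom M) -> sq_dom M `&` Y = set0 ->
  Y #= sq_dom M -> exists G, [/\ square_inj G, M `<` G & sq_dom G = sq_dom M `|` Y].
Proof.
set X := sq_dom M => Msq Xinf XY0 /card_eqPle[YleX XleY].
have [g [Mg gX ginj]] := square_inj_graphP Msq.
have Yinf : infinite_set Y by move=> /(card_le_finite XleY).
have YY : Y `*` Y #<= Y.
  apply: card_le_trans (card_setX_le YleX YleX) _.
  exact: card_le_trans (square_inj_card_le Msq) XleY.
have XYle := card_setU_le_sq YY Yinf XleY (card_lexx Y).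
pose XY2 := (X `|` Y) `*` (X `|` Y).
have /pcard_leP/injfunPex[h hY hinj] := card_le_trans (card_setX_le XYle XYle) YY.
pose f p := if `[< (X `*` X) p >] then g p else h p.
have fXY : set_fun XY2 (X `|` Y) f.
  move=> p XYp; rewrite /f; case: asboolP => Xp; first by left; exact: gX.
  by right; exact: hY.
have finj : set_inj XY2 f := glue_set_inj gX ginj hY hinj XY0.
exists (graph_on XY2 f); split; [exact: square_inj_graph | split | exact: sq_dom_graph].
  rewrite Mg => _ [p [Xp1 Xp2] <-]; exists p; first by split; left.
  by rewrite /f asboolT.
have [y Yy] := infinite_setN0 Yinf.
rewrite Mg => /(_ ((y, y), f (y, y))) [|p [Xp _] [pyy _]].
  by exists (y, y) => //; split; right.
have : (X `&` Y) y by split => //; rewrite pyy in Xp.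
by rewrite XY0.
Qed.

Lemma infinite_square_inj_sub (A : set T) : infinite_set A ->
  exists G, [/\ square_inj G, infinite_set (sq_dom G) & sq_dom G `<=` A].
Proof.
move=> /infiniteP /card_le_subset_eq[N NA /card_eqPle[NleNat NatleN]].
have NN : N `*` N #<= N.
  apply: card_le_trans (card_setX_le NleNat NleNat) _.
  by apply: card_le_trans _ NatleN; rewrite setXTT; case/card_eqPle: card_nat2.
have [G [Gsq GN]] := square_inj_of_card_le NN.
by exists G; rewrite GN; split => //; apply/infiniteP.
Qed.

Lemma card_setXX_le_pointed (A : set T) : infinite_set A -> A `*` A #<= A.
Proof.
move=> /infinite_square_inj_sub[G0 [G0sq G0inf G0A]].
(* [set0] makes the union of the empty chain admissible; infiniteness rules out
   the maximal graph [((x, x), x)] on a singleton, which cannot be extended. *)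
pose P := [set G | [/\ square_inj G, sq_dom G `<=` A &
                     G = set0 \/ infinite_set (sq_dom G)]].
have [M [[Msq MA Minf] Mmax]] : exists M, P M /\ forall G, M `<` G -> ~ P G.
  apply: Zorn_bigcup => F FP Ftot; split.
  - by apply: square_inj_bigcup => // G /FP[].
  - by move=> x [z [G FG Gz]]; have [_ GA _] := FP G FG; apply: GA; exists z.
  - have [[G FG [q Gq]]|F0] := pselect (exists2 G, F G & G !=set0).
      right; have [_ _ [G0'|]] := FP G FG; first by rewrite G0' in Gq.
      apply: contra_not; apply: sub_finite_set.
      by apply: sq_dom_sub => q' Gq'; exists G.
    left; apply/seteqP; split => // q [G FG Gq]; apply: F0.
    by exists G => //; exists q.
have {}Minf : infinite_set (sq_dom M).
  case: Minf => // M0; exfalso; apply: (Mmax G0); last by split => //; right.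
  rewrite M0; split => // G0sub; apply: G0inf; rewrite (_ : sq_dom G0 = set0) //.
  by apply/seteqP; split => // x [z /G0sub].
set X := sq_dom M in Minf Mmax MA *.
have [XleAX|AXleX] := card_le_total X (A `\` X).
  exfalso; have [Y YAX YX] := card_le_subset_eq XleAX.
  have XY0 : X `&` Y = set0 by apply/seteqP; split => // x [Xx /YAX[]].
  have [G [Gsq MG GXY]] := square_inj_extend Msq Minf XY0 YX.
  apply: (Mmax G MG); rewrite /P /= GXY; split => //.
    by move=> x [/MA //|/YAX[]].
  by right; apply: contra_not Minf; apply: sub_finite_set => x Xx; left.
have XX := square_inj_card_le Msq.
have AleX : A #<= X.
  apply: card_le_trans _ (card_setU_le_sq XX Minf (card_lexx X) AXleX).
  by apply: subset_card_le => a Aa; have [?|?] := pselect (X a); [left|right].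
apply: card_le_trans (card_setX_le AleX AleX) _.
exact: card_le_trans XX (subset_card_le MA).
Qed.

End Hessenberg.

Lemma card_setXX_le T (A : set T) : infinite_set A -> A `*` A #<= A.
Proof.
elim/Ppointed: T => T in A *; last exact: card_setXX_le_pointed.
by rewrite empty_eq0 => /(_ (finite_set0 T)).
Qed.

Lemma card_bigcup_le_infinite I T U (D : set I) (F : I -> set T) (K : set U) :
  infinite_set K -> D #<= K -> (forall i, D i -> F i #<= K) ->
  \bigcup_(i in D) F i #<= K.
Proof.
move=> Kinf DK FK; apply: card_le_trans (card_bigcup_le FK) _.
exact: card_le_trans (card_setX_le DK (card_lexx K)) (card_setXX_le Kinf).
Qed.

Lemma card_bigcup_finite_lt I T U (D : set I) (F : I -> set T) (K : set U) :
  infinite_set K -> ~ (K #<= D) -> (forall i, D i -> finite_set (F i)) ->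
  ~ (K #<= \bigcup_(i in D) F i).
Proof.
move=> Kinf KD Ffin KF; have [Dfin|Dinf] := pselect (finite_set D).
  by apply/Kinf/(card_le_finite KF); exact: bigcup_finite.
apply: KD; apply: card_le_trans KF _.
have Fnat i : D i -> F i #<= [set: nat].
  by move=> Di; exact: finite_set_countable (Ffin i Di).
apply: card_le_trans (card_bigcup_le Fnat) _.
apply: card_le_trans _ (card_setXX_le Dinf).
by apply: card_setX_le (card_lexx D) _; apply/infiniteP.
Qed.

Section FreeAlgebra.
Variable X : Type.
Implicit Types (c : set (X -> bool)) (p q : X -> bool).

Definition coord (x : X) : set (X -> bool) := [set f | f x = true].

Lemma Fr_coord x : Fr X (coord x).
Proof. by apply: sub_gen_smallest; exists x. Qed.

Lemma Fr_subalgebra : set_subalgebra (Fr X).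
Proof.
split=> [M [[]] //|M [[]] //|A FA M MP|A C FA FC M MP|A C FA FC M MP];
  have [_ _ MC MU MI] := MP.1.
- exact: MC (FA M MP).
- exact: MU (FA M MP) (FC M MP).
- exact: MI (FA M MP) (FC M MP).
Qed.

Definition finitely_supported c := exists2 S : set X, finite_set S &
  forall p q, (forall x, S x -> p x = q x) -> c p -> c q.

Lemma Fr_finitely_supported c : Fr X c -> finitely_supported c.
Proof.
apply: smallest_sub; last first.
  move=> _ [x _ <-]; exists [set x]; first exact: finite_set1.
  by move=> p q /(_ x erefl) /= <-.
split; [by exists set0 | by exists set0 | | |].
- move=> A [S Sfin SA]; exists S => // p q pq nAp Aq; apply: nAp.
  by apply: SA Aq => x Sx; rewrite pq.
- move=> A C [S Sfin SA] [S' Sfin' SC]; exists (S `|` S'); first by rewrite finite_setU.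
  move=> p q pq [Ap|Cp]; [left; apply: SA Ap|right; apply: SC Cp] => x Sx.
    by apply: pq; left.
  by apply: pq; right.
- move=> A C [S Sfin SA] [S' Sfin' SC]; exists (S `|` S'); first by rewrite finite_setU.
  move=> p q pq [Ap Cp]; split; [apply: SA Ap|apply: SC Cp] => x Sx.
    by apply: pq; left.
  by apply: pq; right.
Qed.

Definition toggle p (y : X) : X -> bool :=
  fun x => if `[< x = y >] then ~~ p y else p x.

Definition sensitive c p : set X := [set y | ~ (c p <-> c (toggle p y))].

Lemma Fr_sensitive_finite c p : Fr X c -> finite_set (sensitive c p).
Proof.
move=> /Fr_finitely_supported[S Sfin Sc]; apply: sub_finite_set Sfin => y.
apply: contra_notP => nSy; split; apply: Sc => x Sx; rewrite /toggle asboolF //;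
  by move=> xy; apply: nSy; rewrite -xy.
Qed.

Definition nonseparating p q := [set c | Fr X c /\ (c p <-> c q)].

Lemma nonseparating_sub_Fr p q : nonseparating p q `<=` Fr X.
Proof. by move=> c []. Qed.

Lemma nonseparating_subalgebra p q : set_subalgebra (nonseparating p q).
Proof.
have [F0 FT FC FU FI] := Fr_subalgebra.
split.
- by split.
- by split.
- by move=> A [FA e]; split; [exact: FC | rewrite /= e].
- by move=> A C [FA eA] [FC' eC]; split; [exact: FU | rewrite /= eA eC].
- by move=> A C [FA eA] [FC' eC]; split; [exact: FI | rewrite /= eA eC].
Qed.

End FreeAlgebra.

Section TwoPoints.
Variables (L : Type) (o : L).

Definition only : L -> bool := fun y => `[< y = o >].
Definition all_but : L -> bool := fun y => ~~ `[< y = o >].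

Lemma coordI_nonseparating x :
  x <> o -> nonseparating only all_but (coord o `&` coord x).
Proof.
move=> xo; have [_ _ _ _ FrI] := Fr_subalgebra L.
split; first exact: FrI _ _ (Fr_coord o) (Fr_coord x).
by rewrite /only /all_but /coord /= (asboolT (erefl o)) (asboolF xo); split=> -[].
Qed.

Lemma coordU_nonseparating y :
  y <> o -> nonseparating only all_but (coord o `|` coord y).
Proof.
move=> yo; have [_ _ _ FrU _] := Fr_subalgebra L.
split; first exact: FrU _ _ (Fr_coord o) (Fr_coord y).
rewrite /only /all_but /coord /= (asboolT (erefl o)) (asboolF yo).
by split=> _; [right|left].
Qed.

Lemma sensitive_interpolant x y c : x <> o -> y <> o ->
  nonseparating only all_but c -> coord o `&` coord x `<=` c ->
  c `<=` coord o `|` coord y -> sensitive c only x \/ sensitive c all_but y.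
Proof.
move=> xo yo [_ c12] xc cy.
have ox : o <> x by move=> /esym.
have oy : o <> y by move=> /esym.
have c1x : c (toggle only x).
  apply: xc; rewrite /coord /toggle /only /=.
  by rewrite (asboolF ox) asboolT // asboolT // (asboolF xo).
have nc2y : ~ c (toggle all_but y).
  move=> /cy; rewrite /coord /toggle /all_but /=.
  by rewrite (asboolF oy) asboolT // asboolT // (asboolF yo) => -[].
have [c1|nc1] := pselect (c only).
  by right=> e; apply/nc2y/e/c12.
by left=> e; apply/nc1/e.
Qed.

End TwoPoints.

Lemma nonseparating_not_kappa_FN K L (o : L) (E : set L) :
  infinite_set [set: K] -> ~ ([set: L] #<= [set: K]) -> E #= [set: K] -> ~ E o ->
  ~ kappa_FN K (nonseparating (only o) (all_but o)).
Proof.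
move=> Kinf LK /card_eqPle[EK KE] Eo [f [fB finterp]].
have fK a : nonseparating (only o) (all_but o) a -> f a #<= [set: K].
  by move=> Ba; have [_ Kf] := fB a Ba; case: (card_le_total (f a) [set: K]).
have fFr a c : nonseparating (only o) (all_but o) a -> f a c -> Fr L c.
  by move=> Ba fac; have [/(_ c fac) []] := fB a Ba.
pose S x := \bigcup_(c in f (coord o `&` coord x)) sensitive c (all_but o).
pose T y := \bigcup_(c in f (coord o `|` coord y)) sensitive c (only o).
have S_small x : x <> o -> ~ ([set: K] #<= S x).
  move=> xo; have Bx := coordI_nonseparating xo.
  apply: (card_bigcup_finite_lt Kinf (fB _ Bx).2) => c fc.
  exact: Fr_sensitive_finite (fFr _ _ Bx fc).
have T_le y : E y -> T y #<= [set: K].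
  move=> Ey; have By : nonseparating (only o) (all_but o) (coord o `|` coord y).
    by apply: coordU_nonseparating => yo; apply: Eo; rewrite -yo.
  apply: (card_bigcup_le_infinite Kinf (fK _ By)) => c fc.
  exact: finite_card_le_infinite (Fr_sensitive_finite _ (fFr _ _ By fc)) Kinf.
have [a Ta] : exists a, ~ ([set o] `|` \bigcup_(y in E) T y) a.
  apply: (card_le_setN LK).
  apply: (card_setU_le_sq (card_setXX_le Kinf) Kinf).
    exact: finite_card_le_infinite (finite_set1 o) Kinf.
  exact: card_bigcup_le_infinite Kinf EK T_le.
have ao : a <> o by move=> ao; apply: Ta; left.
apply: (S_small a ao); apply: card_le_trans KE _; apply: subset_card_le => y Ey.
have yo : y <> o by move=> yo; apply: Eo; rewrite -yo.
have [c [fac [fbc [ac cb]]]] := finterp _ _ (coordI_nonseparating ao)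
  (coordU_nonseparating yo) (fun p ap => or_introl ap.1).
have [/(_ c fac) Bc _] := fB _ (coordI_nonseparating ao).
have [a_sens|y_sens] := sensitive_interpolant ao yo Bc ac cb; last by exists c.
by case: Ta; right; exists y => //; exists c.
Qed.

Theorem proposition7p6 (K L : Type) :
  infinite_set [set: K] -> is_successor_card K L ->
  exists B : set (set (L -> bool)),
    B `<=` Fr L /\ set_subalgebra B /\ ~ kappa_FN K B.
Proof.
(* only |K| < |L| is used, not that |L| is the successor of |K| *)
move=> Kinf [KL [LK _]].
have [E _ EK] := card_le_subset_eq KL.
have [o Eo] : exists o, ~ E o by apply: (card_le_setN LK); case/card_eqPle: EK.
exists (nonseparating (only o) (all_but o)); split; first exact: nonseparating_sub_Fr.
split; first exact: nonseparating_subalgebra.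
exact: nonseparating_not_kappa_FN Kinf LK EK Eo.
Qed.
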